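(* Let $f:\{0,1\}^n\to\{0,1\}$ with $f(0^n)=0$, and suppose $f$ has $k$ minimal 1-certificates $c_1,\dots,c_k$ such that for each $i$, the total number of contradictions between $c_i$ and all the other $c_j$ ($j\ne i$) together is at most 2, and such that for each position $p\in[n]$ exactly one of $c_1,\dots,c_k$ assigns the value 1 to $p$. Then $s_0(f)\ge k$.
   Context: A 1-certificate is a partial assignment $c:S\to\{0,1\}$, $S\subseteq[n]$, such that $f(y)=1$ for every $y\in\{0,1\}^n$ agreeing with $c$ on $S$; it is minimal if no restriction of $c$ to a proper subset of $S$ is a 1-certificate. The number of contradictions between two partial assignments is the number of positions where one assigns 1 and the other assigns 0. $s_0(f)=\max\{|\{i: f(x^{\{i\}})\ne f(x)\}| : f(x)=0\}$, where $x^{\{i\}}$ is $x$ with bit $i$ flipped. *)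

From mathcomp Require Import all_boot all_order.
Set Implicit Arguments. Unset Strict Implicit. Unset Printing Implicit Defensive.

(* Inputs x in {0,1}^n, indexed by positions 'I_n (0-based stand-in for [n]). *)
Definition input (n : nat) := {ffun 'I_n -> bool}.

(* Partial assignment c : S -> {0,1}; c i = None means i \notin S. *)
Definition passign (n : nat) := {ffun 'I_n -> option bool}.

Definition dom n (c : passign n) : {set 'I_n} := [set i | c i != None].

Definition agrees n (c : passign n) (y : input n) : bool :=
  [forall i, if c i is Some b then y i == b else true].

Definition one_cert n (f : input n -> bool) (c : passign n) : Prop :=
  forall y : input n, agrees c y -> f y = true.

Definition restrict n (c : passign n) (S : {set 'I_n}) : passign n :=
  [ffun i => if i \in S then c i else None].

Definition min_one_cert n (f : input n -> bool) (c : passign n) : Prop :=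
  one_cert f c /\
  forall S : {set 'I_n}, S \proper dom c -> ~ one_cert f (restrict c S).

Definition contradictions n (c d : passign n) : nat :=
  #|[set i | ((c i == Some true) && (d i == Some false))
           || ((c i == Some false) && (d i == Some true))]|.

Definition zero_input n : input n := [ffun _ => false].

Definition flip n (x : input n) (i : 'I_n) : input n :=
  [ffun j => if j == i then ~~ x j else x j].

(* s_0(f) = max over x with f x = 0 of #{i : f(x^{i}) <> f(x)} (0 if no such x) *)
Definition s0 n (f : input n -> bool) : nat :=
  \max_(x : input n | f x == false) #|[set i | f (flip x i) != f x]|.

From mathcomp Require Import all_boot all_order.
Set Implicit Arguments. Unset Strict Implicit. Unset Printing Implicit Defensive.

(* Call a position single-zero if exactly one certificate assigns it 0; it is
   then an edge between its owner (the certificate assigning it 1) and its zero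
   holder.  Every edge at c_i is a contradiction of c_i, so this multigraph has
   maximum degree 2 and therefore admits an injective choice of an endpoint for
   every edge.  Force a position to 0 if it has at least two 0-assigners or if
   its edge chose its owner.  Every position where c_i disagrees with the
   template "1 exactly off the forced positions" costs c_i a contradiction, and
   costs two unless it is an edge that chose c_i; hence c_i disagrees with the
   template at most once.  Take x with f x = 0, vanishing on forced positions,
   with as many ones as possible.  Then for each i either a 1 of c_i missing in
   x can be added, or x disagrees with c_i only once; in both cases flipping
   some p with c_i p = ~~ x p makes f true.  The map i |-> p is injective (a 1
   determines the owner, a 0 at an unforced position its unique 0-assigner), so
   x has at least k sensitive positions. *)

Lemma card_set_sum (T : finType) (P : pred T) : #|[set x | P x]| = \sum_x P x.
Proof. by rewrite -sum1dep_card big_mkcond; apply: eq_bigr => x _; case: (P x). Qed.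

Lemma in_card1_pick (T : finType) (x0 : T) (S : {set T}) x :
  #|S| = 1 -> (x \in S) = (x == odflt x0 [pick y in S]).
Proof.
move=> /eqP/cards1P[y ->]; rewrite in_set1; case: pickP => [z|/(_ y)].
  by rewrite in_set1 => /eqP ->.
by rewrite in_set1 eqxx.
Qed.

Lemma leq_add_sum (T : finType) (F : T -> nat) p q :
  p != q -> F p + F q <= \sum_r F r.
Proof.
by move=> pq; rewrite (bigD1 p) // (bigD1 q) 1?eq_sym //= leq_add2l leq_addr.
Qed.

Section EndpointInjection.

Variables (E V : finType) (a b : E -> V).

Definition touches (e : E) (v : V) : bool := (a e == v) || (b e == v).

Definition degree (A : {set E}) (v : V) : nat := #|[set e in A | touches e v]|.

Definition endpoint_injection (A : {set E}) (g : E -> V) : Prop :=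
  {in A, forall e, touches e (g e)} /\ {in A &, injective g}.

Lemma degree_setD1 (A : {set E}) e v : e \in A -> touches e v ->
  degree A v = (degree (A :\ e) v).+1.
Proof.
move=> eA tev; rewrite /degree (cardsD1 e) !inE eA tev; congr (_.+1).
by apply: eq_card => d; rewrite !inE andbA.
Qed.

Lemma degree_setD1_le (A : {set E}) e v : degree (A :\ e) v <= degree A v.
Proof.
by apply: subset_leq_card; apply/subsetP => d; rewrite !inE => /andP[/andP[_ ->] ->].
Qed.

Lemma endpoint_injection_extend (A : {set E}) e w g :
  e \in A -> touches e w -> endpoint_injection (A :\ e) g ->
  {in A :\ e, forall d, g d != w} ->
  endpoint_injection A (fun d => if d == e then w else g d).
Proof.
move=> eA tew [tg ig] gw; split=> [d dA | d1 d2 d1A d2A] /=.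
  by case: eqVneq => [-> //|de]; apply: tg; rewrite !inE de.
have inD d : d \in A -> d != e -> d \in A :\ e by rewrite !inE => -> ->.
case: eqVneq => [->|d1e]; case: eqVneq => [->|d2e] //.
- by move=> w2; have := gw d2 (inD _ d2A d2e); rewrite -w2 eqxx.
- by move=> w1; have := gw d1 (inD _ d1A d1e); rewrite w1 eqxx.
- by apply: ig; apply: inD.
Qed.

(* Strengthened so that the induction goes through: remove an edge at v (any
   edge if v is isolated) and give it its other endpoint w, which has degree at
   most 1 in the remaining graph. *)
Lemma endpoint_injection_avoiding (A : {set E}) v :
  {in A, forall e, a e != b e} -> (forall u, degree A u <= 2) ->
  degree A v <= 1 ->
  exists2 g, endpoint_injection A g & {in A, forall e, g e != v}.
Proof.
have [m] := ubnP #|A|; elim: m A v => // m IH A v /ltnSE leAm loopA degA degAv.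
have [A0|[e0 e0A]] := set_0Vmem A.
  by exists a; [split=> [e|e1 e2] | move=> e]; rewrite A0 inE.
have [e eA freev] : exists2 e, e \in A & {in A :\ e, forall d, ~~ touches d v}.
  case: (pickP [pred e in A | touches e v]) => [e /andP[eA tev] | none].
    exists e => // d dD; apply/negP => tdv.
    have := degAv; rewrite (degree_setD1 eA tev) ltnS leqn0.
    by move=> /eqP/cards0_eq/setP/(_ d); rewrite !inE -in_setD1 dD tdv.
  exists e0 => // d; rewrite in_setD1 => /andP[_ dA]; have := none d; rewrite /= dA.
  by apply: negbT.
pose w := if a e == v then b e else a e.
have tew : touches e w by rewrite /touches /w; case: ifP; rewrite eqxx ?orbT.
have wv : w != v.
  by rewrite /w; case: (eqVneq (a e) v) => [<-|//]; rewrite eq_sym; apply: loopA.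
have loopD : {in A :\ e, forall d, a d != b d}.
  by move=> d /setD1P[_]; apply: loopA.
have degD u : degree (A :\ e) u <= 2 := leq_trans (degree_setD1_le _ _ _) (degA u).
have degDw : degree (A :\ e) w <= 1 by have := degA w; rewrite (degree_setD1 eA tew).
have [|g gE gw] := IH (A :\ e) w _ loopD degD degDw.
  by rewrite (cardsD1 e) eA in leAm.
exists (fun d => if d == e then w else g d).
  exact: endpoint_injection_extend.
move=> d dA /=; case: (eqVneq d e) => [//|de].
have dD : d \in A :\ e by rewrite !inE de.
by apply: contraNneq (freev d dD) => <-; case: gE => + _; apply.
Qed.

Lemma endpoint_injection_exists (A : {set E}) :
  {in A, forall e, a e != b e} -> (forall u, degree A u <= 2) ->
  exists g, endpoint_injection A g.
Proof.
move=> loopA degA; have [A0|[e eA]] := set_0Vmem A.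
  by exists a; split=> [e|e1 e2]; rewrite A0 inE.
have tea : touches e (a e) by rewrite /touches eqxx.
have loopD : {in A :\ e, forall d, a d != b d}.
  by move=> d /setD1P[_]; apply: loopA.
have degD u : degree (A :\ e) u <= 2 := leq_trans (degree_setD1_le _ _ _) (degA u).
have degDa : degree (A :\ e) (a e) <= 1.
  by have := degA (a e); rewrite (degree_setD1 eA tea).
have [g gE ga] := endpoint_injection_avoiding loopD degD degDa.
by exists (fun d => if d == e then a e else g d); apply: endpoint_injection_extend.
Qed.

End EndpointInjection.

Section Inputs.

Variable n : nat.
Implicit Types (x y w : input n) (d : passign n) (f : input n -> bool).

Definition disagree d y : {set 'I_n} := [set p | d p == Some (~~ y p)].

Lemma agrees_flip d y p :
  p \in disagree d y -> {in disagree d y, forall q, q = p} -> agrees d (flip y p).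
Proof.
move=> pD Dp; apply/forallP => q; rewrite ffunE.
case: (eqVneq q p) => [->|qp].
  by move: pD; rewrite inE => /eqP ->; rewrite eqxx.
have : q \notin disagree d y by apply: contra_neqN qp => /Dp.
by rewrite inE; case: (d q) => [[]|]; case: (y q).
Qed.

Lemma one_cert_disagree f d y :
  one_cert f d -> f y = false -> exists p, p \in disagree d y.
Proof.
move=> cert fy; have [D0|[p pD]] := set_0Vmem (disagree d y); last by exists p.
suff /cert : agrees d y by rewrite fy.
apply/forallP => q; move/setP: D0 => /(_ q); rewrite !inE.
by case: (d q) => [[]|]; case: (y q).
Qed.

Lemma card_flip_false y p : y p = false ->
  #|[set q | flip y p q]| = #|[set q | y q]|.+1.
Proof.
move=> yp; rewrite (cardsD1 p) !inE ffunE eqxx yp; congr _.+1.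
by apply: eq_card => q; rewrite !inE ffunE; case: (eqVneq q p) => [->|]; rewrite ?yp.
Qed.

Definition below x w := forall p, x p -> w p.

Lemma exists_maximal_zero_below f w : f (zero_input n) = false ->
  exists x, [/\ f x = false, below x w & forall p, ~~ x p -> w p -> f (flip x p)].
Proof.
move=> f0; pose P y := ~~ f y && [forall p, y p ==> w p].
have P0 : P (zero_input n).
  by rewrite /P f0; apply/forallP => p; rewrite ffunE.
case: (arg_maxnP (fun y => #|[set p | y p]|) P0).
move=> x /andP[/negbTE fx /forallP xw] xmax.
exists x; split=> // [p /(implyP (xw p)) //|p xp wp].
apply: contraT => /negbTE fxp.
have Pxp : P (flip x p).
  rewrite /P fxp; apply/forallP => q; rewrite ffunE.
  by case: eqVneq => [->|_]; [exact/implyP | exact: xw].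
by have := xmax _ Pxp; rewrite /geq /= card_flip_false ?(negbTE xp) // ltnn.
Qed.

Lemma sensitive_flip f w x d :
  one_cert f d -> f x = false -> below x w ->
  (forall p, ~~ x p -> w p -> f (flip x p)) -> #|disagree d w| <= 1 ->
  exists p, f (flip x p) && (p \in disagree d x).
Proof.
move=> cert fx xw xmax Dw1.
case: (boolP [exists p, [&& p \in disagree d x, ~~ x p & w p]]).
  by move=> /existsP[p /and3P[pD xp wp]]; exists p; rewrite xmax.
move=> /existsPn noflip.
have xw_sub : disagree d x \subset disagree d w.
  apply/subsetP => p pD; have := noflip p; rewrite pD /=.
  move: pD; rewrite !inE; case xpE: (x p) => /=; last by move=> ? /negbTE ->.
  by rewrite (xw p xpE).
have [p0 p0D] := one_cert_disagree cert fx.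
exists p0; rewrite p0D andbT; apply: cert; apply: agrees_flip => // q qD.
by apply: (card_le1_eqP Dw1); apply: (subsetP xw_sub).
Qed.

Lemma card_sensitive_le_s0 f x : f x = false ->
  #|[set p | f (flip x p) != f x]| <= s0 f.
Proof. by move=> fx; rewrite /s0 (bigD1 x) ?fx //= leq_maxl. Qed.

End Inputs.

Definition contra_at n (d e : passign n) (p : 'I_n) : bool :=
  ((d p == Some true) && (e p == Some false))
  || ((d p == Some false) && (e p == Some true)).

Lemma contradictions_sum n (d e : passign n) :
  contradictions d e = \sum_p contra_at d e p.
Proof. exact: card_set_sum. Qed.

Lemma contradictions_self n (d : passign n) : contradictions d d = 0.
Proof.
rewrite contradictions_sum big1 // => p _.
by rewrite /contra_at; case: (d p) => [[]|].
Qed.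

Section CertificateFamily.

Variables (n : nat) (I : finType) (i0 : I) (c : I -> passign n).

Definition ones_at p := [set i | c i p == Some true].
Definition zeros_at p := [set i | c i p == Some false].
Definition conflicts_at i p := \sum_j contra_at (c i) (c j) p.

Hypothesis card_ones_at : forall p, #|ones_at p| = 1.
Hypothesis contradictions_le2 :
  forall i, \sum_(j | j != i) contradictions (c i) (c j) <= 2.

Lemma sum_conflicts_at_le2 i : \sum_p conflicts_at i p <= 2.
Proof.
rewrite exchange_big /=; under eq_bigr do rewrite -contradictions_sum.
by rewrite (bigD1 i) //= contradictions_self add0n; apply: contradictions_le2.
Qed.

Lemma conflicts_at_true i p : c i p = Some true -> conflicts_at i p = #|zeros_at p|.
Proof.
move=> cip; rewrite card_set_sum; apply: eq_bigr => j _.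
by rewrite /contra_at cip; case: (c j p) => [[]|].
Qed.

Lemma conflicts_at_false i p : c i p = Some false -> conflicts_at i p = 1.
Proof.
move=> cip; rewrite -(card_ones_at p) card_set_sum.
by apply: eq_bigr => j _; rewrite /contra_at cip; case: (c j p) => [[]|].
Qed.

(* The default [i0] is never returned by [owner]; [zero_holder] is meaningful
   only on [single_zero]. *)
Definition owner p := odflt i0 [pick i in ones_at p].
Definition single_zero := [set p | #|zeros_at p| == 1].
Definition zero_holder p := odflt i0 [pick i in zeros_at p].

Lemma ones_atE p i : (i \in ones_at p) = (i == owner p).
Proof. exact: in_card1_pick. Qed.

Lemma zeros_atE p i : p \in single_zero -> (i \in zeros_at p) = (i == zero_holder p).
Proof. by rewrite inE => /eqP; apply: in_card1_pick. Qed.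

Lemma owner_true p : c (owner p) p = Some true.
Proof. by apply/eqP; have := ones_atE p (owner p); rewrite inE eqxx. Qed.

Lemma owner_unique p i : c i p = Some true -> i = owner p.
Proof. by move=> cip; apply/eqP; rewrite -ones_atE inE cip. Qed.

Lemma zero_holder_false p : p \in single_zero -> c (zero_holder p) p = Some false.
Proof.
by move=> pS; apply/eqP; have := zeros_atE (zero_holder p) pS; rewrite inE eqxx.
Qed.

Lemma owner_neq_zero_holder : {in single_zero, forall p, owner p != zero_holder p}.
Proof.
by move=> p pS; apply: contra_eq_neq (owner_true p) => ->; rewrite zero_holder_false.
Qed.

Lemma degree_single_zero_le2 v : degree owner zero_holder single_zero v <= 2.
Proof.
rewrite /degree card_set_sum; apply: leq_trans (sum_conflicts_at_le2 v).
apply: leq_sum => p _; case/boolP: (_ && _) => //= /andP[pS /orP[] /eqP <-].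
  by rewrite (conflicts_at_true (owner_true p)); move: pS; rewrite inE => /eqP ->.
by rewrite (conflicts_at_false (zero_holder_false pS)).
Qed.

Section Orientation.

Variable g : 'I_n -> I.
Hypothesis g_inj : endpoint_injection owner zero_holder single_zero g.

Definition forced_zero :=
  [set p | (1 < #|zeros_at p|) || (p \in single_zero) && (g p == owner p)].

Definition template : input n := [ffun p => p \notin forced_zero].

Lemma conflicts_at_disagree i p : p \in disagree (c i) template ->
  0 < conflicts_at i p /\ (1 < conflicts_at i p \/ p \in single_zero /\ g p = i).
Proof.
rewrite inE ffunE negbK; have [pF|pF] := boolP (p \in forced_zero) => /eqP cip.
  rewrite (conflicts_at_true cip); rewrite inE in pF.
  case/orP: pF => [zp|/andP[pS /eqP gp]]; first by split; [apply: ltnW | left].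
  have := pS; rewrite inE => /eqP ->; split=> //; right; split=> //.
  by rewrite gp (owner_unique cip).
rewrite (conflicts_at_false cip); split=> //; right.
have iZ : i \in zeros_at p by rewrite inE cip.
rewrite inE negb_or -leqNgt in pF; case/andP: pF => zp1 pF.
have pS : p \in single_zero.
  by rewrite inE eqn_leq zp1; apply/card_gt0P; exists i.
rewrite pS /= in pF; split=> //.
have [/(_ p pS) + _] := g_inj; rewrite /touches eq_sym (negbTE pF) /= => /eqP <-.
by apply/esym/eqP; rewrite -zeros_atE.
Qed.

Lemma card_disagree_template i : #|disagree (c i) template| <= 1.
Proof.
apply/card_le1_eqP => p q pD qD; apply/eqP.
apply: contraTT (sum_conflicts_at_le2 i) => qp; rewrite -ltnNge.
have sum_pq := leq_add_sum (conflicts_at i) qp.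
have [q1 [q2|[qS gq]]] := conflicts_at_disagree qD;
  have [p1 [p2|[pS gp]]] := conflicts_at_disagree pD.
- exact: leq_trans (leq_add q2 p1) sum_pq.
- exact: leq_trans (leq_add q2 p1) sum_pq.
- exact: leq_trans (leq_add q1 p2) sum_pq.
case/negP: qp; apply/eqP; case: g_inj => _; apply=> //; by rewrite gp gq.
Qed.

Lemma disagree_below_unique x p i j : below x template ->
  p \in disagree (c i) x -> p \in disagree (c j) x -> i = j.
Proof.
rewrite !inE => xT /eqP cip /eqP cjp; case xp: (x p) in cip cjp.
  have : #|zeros_at p| <= 1.
    by have := xT p xp; rewrite ffunE inE negb_or -leqNgt => /andP[].
  by move/card_le1_eqP; apply; rewrite inE ?cip ?cjp.
by rewrite (owner_unique cip) (owner_unique cjp).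
Qed.

Lemma card_le_s0 f : f (zero_input n) = false -> (forall i, one_cert f (c i)) ->
  #|I| <= s0 f.
Proof.
move=> f0 cert; have [x [fx xT xmax]] := exists_maximal_zero_below template f0.
have sens i := sensitive_flip (cert i) fx xT xmax (card_disagree_template i).
pose s i := xchoose (sens i).
have s_inj : injective s.
  move=> i j sij; have /andP[_ Di] := xchooseP (sens i).
  have /andP[_ Dj] := xchooseP (sens j).
  by apply: disagree_below_unique xT Di _; rewrite -/(s i) sij.
rewrite -cardsT -(card_imset _ s_inj); apply: leq_trans (card_sensitive_le_s0 fx).
apply: subset_leq_card; apply/subsetP => _ /imsetP[i _ ->].
by rewrite inE fx; have /andP[-> _] := xchooseP (sens i).
Qed.

End Orientation.

End CertificateFamily.

Theorem lemma3 (n k : nat) (f : input n -> bool) (c : 'I_k -> passign n) :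
  f (zero_input n) = false ->
  injective c ->
  (forall i, min_one_cert f (c i)) ->
  (forall i, \sum_(j < k | j != i) contradictions (c i) (c j) <= 2) ->
  (forall p : 'I_n, #|[set i | c i p == Some true]| = 1) ->
  k <= s0 f.
Proof.
move=> f0 _ cert contra_le2 ones1.
case: k c cert contra_le2 ones1 => [//|k] c cert contra_le2 ones1.
have [g g_inj] := endpoint_injection_exists
  (owner_neq_zero_holder ord0 ones1) (degree_single_zero_le2 ord0 ones1 contra_le2).
rewrite -[k.+1]card_ord; apply: (card_le_s0 ones1 contra_le2 g_inj f0) => i.
exact: (cert i).1.
Qed.
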